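(* For every $\bm U\in\mathbb V_h$, $|\bm U|_{1,h}\le\frac{\pi}{2}\|\nabla_h\bm U\|_h$.
   Context: $\Omega=[x_L,x_R]\times[y_L,y_R]$, $l_1=x_R-x_L$, $l_2=y_R-y_L$, $N_1,N_2$ even, $h_r=l_r/N_r$, grid points $x_{j_1}=x_L+j_1h_1$, $y_{j_2}=y_L+j_2h_2$, $0\le j_r\le N_r-1$. $\mathbb V_h$: doubly periodic grid functions identified with vectors $\bm U=(U_{0,0},U_{1,0},\dots,U_{N_1-1,0},U_{0,1},\dots,U_{N_1-1,N_2-1})^T$. $\langle\bm U,\bm V\rangle_h=h_1h_2\sum_{j_1,j_2}U_{j_1,j_2}V_{j_1,j_2}$, $\|\bm U\|_h^2=\langle\bm U,\bm U\rangle_h$. $\delta_x^+U_{j_1,j_2}=(U_{j_1+1,j_2}-U_{j_1,j_2})/h_1$, $\delta_y^+U_{j_1,j_2}=(U_{j_1,j_2+1}-U_{j_1,j_2})/h_2$, $\|\nabla_h\bm U\|_h^2=\|\delta_x^+\bm U\|_h^2+\|\delta_y^+\bm U\|_h^2$. With $\mu_r=2\pi/l_r$, $g^{(1)}_k(x)=\frac1{N_1}\sum_{l=-N_1/2}^{N_1/2}\frac1{a_l}e^{\mathrm il\mu_1(x-x_k)}$, $a_l=1$ for $|l|<N_1/2$, $a_{\pm N_1/2}=2$ (similarly $g^{(2)}_k(y)$), $\bm D_1^x=((g^{(1)}_k)'(x_j))_{j,k=0}^{N_1-1}$, $\bm D_1^y=((g^{(2)}_k)'(y_j))_{j,k=0}^{N_2-1}$,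 and $|\bm U|_{1,h}^2=\langle-(\bm I_{N_2}\otimes(\bm D_1^x)^2+(\bm D_1^y)^2\otimes\bm I_{N_1})\bm U,\bm U\rangle_h$ ($\otimes$ Kronecker product). *)

From mathcomp Require Import all_boot all_order all_algebra.
From mathcomp Require Import mxtens.
From mathcomp Require Import all_classical all_reals all_analysis.
Set Implicit Arguments. Unset Strict Implicit. Unset Printing Implicit Defensive.
Import Order.TTheory GRing.Theory Num.Theory.
Local Open Scope ring_scope.

Section Defs.
Variable R : realType.

Definition inv_a (N : nat) (l : int) : R :=
  if `|l|%N == N./2 then 2^-1 else 1.

(* the trigonometric cardinal function g_k on the grid with N points,
   spacing h (grid points x_j = x0 + j h), mu = 2 pi / (N h).
   g_k(x) = 1/N sum_{l=-N/2}^{N/2} (1/a_l) e^{i l mu (x - x_k)};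
   the imaginary parts cancel pairwise (l <-> -l, a_l = a_{-l}), so it is
   the real function below. *)
Definition gcard (N : nat) (x0 h : R) (k : nat) (x : R) : R :=
  let mu := 2 * pi / (N%:R * h) in
  N%:R^-1 * \sum_(0 <= i < N.+1)
     let l : int := (i%:Z - (N./2)%:Z)%R in
     inv_a N l * cos (l%:~R * mu * (x - (x0 + k%:R * h))).

Definition Dspec (N : nat) (x0 h : R) : 'M[R]_N :=
  \matrix_(j < N, k < N) derive1 (gcard N x0 h k) (x0 + (j : nat)%:R * h).

(* grid functions: vectors of length N2*N1, U_{j1,j2} at index j2*N1 + j1 *)
Definition gval (N1 N2 : nat) (U : 'cV[R]_(N2 * N1)) (j1 : 'I_N1) (j2 : 'I_N2) : R :=
  U (mxtens_index (j2, j1)) 0.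

Definition ip_h (N1 N2 : nat) (h1 h2 : R) (U V : 'cV[R]_(N2 * N1)) : R :=
  h1 * h2 * \sum_(j1 < N1) \sum_(j2 < N2) gval U j1 j2 * gval V j1 j2.

Definition norm_h (N1 N2 : nat) (h1 h2 : R) (U : 'cV[R]_(N2 * N1)) : R :=
  Num.sqrt (ip_h h1 h2 U U).

Definition dxp (N1 N2 : nat) (h1 : R) (U : 'cV[R]_(N2 * N1)) : 'cV[R]_(N2 * N1) :=
  \col_k (let ij := mxtens_unindex k in
          (gval U (ordS ij.2) ij.1 - gval U ij.2 ij.1) / h1).
Definition dyp (N1 N2 : nat) (h2 : R) (U : 'cV[R]_(N2 * N1)) : 'cV[R]_(N2 * N1) :=
  \col_k (let ij := mxtens_unindex k in
          (gval U ij.2 (ordS ij.1) - gval U ij.2 ij.1) / h2).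

Definition grad_norm_h (N1 N2 : nat) (h1 h2 : R) (U : 'cV[R]_(N2 * N1)) : R :=
  Num.sqrt (ip_h h1 h2 (dxp h1 U) (dxp h1 U) + ip_h h1 h2 (dyp h2 U) (dyp h2 U)).

Definition semi1_h (N1 N2 : nat) (xL h1 yL h2 : R) (U : 'cV[R]_(N2 * N1)) : R :=
  let Dx := Dspec N1 xL h1 in
  let Dy := Dspec N2 yL h2 in
  let A : 'M[R]_(N2 * N1) := tensmx (1%:M : 'M[R]_N2) (Dx *m Dx)
                           + tensmx (Dy *m Dy) (1%:M : 'M[R]_N1) in
  Num.sqrt (ip_h h1 h2 (- (A *m U)) U).

End Defs.

(* The spectral matrix D is antisymmetric, so -<D^2 v, v> = |D v|^2 and the claim is a
   comparison of two quadratic forms.  On the N = 2M grid points, D maps a vector to the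
   trigonometric polynomial whose l-th mode (1 <= l < M; the mode l = M is annihilated) is
   the l-th discrete Fourier mode of v multiplied by the frequency theta_l / h, with
   theta_l = 2 pi l / N.  A forward difference multiplies the l-th Fourier coefficients by
   a rotation of modulus 2 sin (theta_l / 2), so by Bessel's inequality |delta^+ v|^2
   dominates the sum over these modes with weights (2 sin (theta_l / 2) / h)^2.  Jordan's
   inequality theta <= pi sin (theta / 2) on [0, pi] compares the weights with constant
   (pi/2)^2.  In two dimensions the operator is a Kronecker sum, so the bound holds row by
   row and column by column. *)

From mathcomp Require Import all_boot all_order all_algebra.
From mathcomp Require Import mxtens.
From mathcomp Require Import all_classical all_reals all_analysis.
From mathcomp Require Import ring lra zify.
Import Order.TTheory GRing.Theory Num.Theory numFieldNormedType.Exports.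
Local Open Scope classical_set_scope.
Local Open Scope ring_scope.

Section Trigonometry.
Context {R : realType}.

Lemma natr_mul2pi (n : nat) : n%:R * (2 * pi) = pi *+ 2 *+ n :> R.
Proof. by rewrite -mulrnA -[RHS]mulr_natl natrM; ring. Qed.

Lemma cosD_nat2pi (y : R) (n : nat) : cos (y + n%:R * (2 * pi)) = cos y.
Proof. by rewrite natr_mul2pi (periodicn (@cosD2pi R)). Qed.

Lemma sinD_nat2pi (y : R) (n : nat) : sin (y + n%:R * (2 * pi)) = sin y.
Proof. by rewrite natr_mul2pi (periodicn (@sinD2pi R)). Qed.

Lemma sin_nat_mulpi (n : nat) : sin (n%:R * pi) = 0 :> R.
Proof.
elim: n => [|n IH]; first by rewrite mul0r sin0.
by rewrite -natr1 mulrDl mul1r sinDpi IH oppr0.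
Qed.

Lemma cos_mul_cos (x y : R) :
  cos x * cos y = (cos (x - y) + cos (x + y)) / 2.
Proof. by rewrite cosB cosD; field. Qed.

Lemma ler_cos (a b : R) : 0 <= a -> a <= b -> b <= pi -> cos b <= cos a.
Proof.
move=> a_ge0 le_ab b_lepi; have b_ge0 := le_trans a_ge0 le_ab.
have a_lepi := le_trans le_ab b_lepi.
by rewrite leNgt ltr_cos ?in_itv /= ?a_ge0 ?b_ge0 ?a_lepi ?b_lepi // -leNgt.
Qed.

(* Jordan's inequality.  [f := pi sin - 2 id] vanishes at [0] and [pi/2] and [f'] is
   decreasing on [[0, pi/2]], so [f x >= f 0] if [f' x >= 0] and [f x >= f (pi/2)] otherwise. *)
Lemma jordan_sin (x : R) : 0 <= x <= pi / 2 -> 2 * x <= pi * sin x.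
Proof.
move=> /andP[x_ge0 x_le]; have pi_gt0 := pi_gt0 R.
pose f (y : R) := pi * sin y - 2 * y.
have f_deriv (y : R) : is_derive y (1 : R) f (pi * cos y - 2).
  rewrite /f; have -> : (fun y => pi * sin y - 2 * y) = pi \*: (@sin R) - 2 \*: id by [].
  by apply: is_derive_eq; rewrite -[LHS]/(pi * cos y - 2 * 1) mulr1.
have f'E y : derive1 f y = pi * cos y - 2 by rewrite derive1E derive_val.
have f_der y : derivable f y 1 by case: (f_deriv y).
have f_cont a b : {within `[a, b], continuous f}.
  apply: continuous_subspaceT => y.
  exact/differentiable_continuous/derivable1_diffP.
suff : 0 <= f x by rewrite subr_ge0.
have [f'x_ge0|f'x_lt0] := leP 0 (derive1 f x).
  have -> : 0 = f 0 by rewrite /f sin0 !mulr0 subr0.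
  have f'_ge0 y : y \in `]0, x[ -> 0 <= derive1 f y.
    rewrite in_itv /= => /andP[y_gt0 ltyx].
    apply: le_trans f'x_ge0 _; rewrite !f'E lerD2r ler_pM2l // ler_cos //; lra.
  apply: (ger0_derive1_le_cc (fun y _ => f_der y) f'_ge0 (f_cont 0 x));
    by rewrite ?in_itv /= ?lexx ?x_ge0.
have -> : 0 = f (pi / 2) by rewrite /f sin_pihalf mulr1 mulrC divfK ?subrr // pnatr_eq0.
have f'_le0 y : y \in `]x, pi / 2[ -> derive1 f y <= 0.
  rewrite in_itv /= => /andP[ltxy y_lt].
  apply: le_trans (ltW f'x_lt0); rewrite !f'E lerD2r ler_pM2l // ler_cos //; lra.
apply: (ler0_derive1_le_cc (fun y _ => f_der y) f'_le0 (f_cont x (pi / 2)));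
  by rewrite ?in_itv /= ?lexx ?x_ge0 ?x_le.
Qed.

Lemma is_derive_cos_affine (a b c x : R) :
  is_derive x 1 (fun y => a * cos (b * (y - c))) (a * (- sin (b * (x - c)) * b)).
Proof.
have affine : is_derive x 1 (fun y => b * (y - c)) b.
  have -> : (fun y => b * (y - c)) = b \*: (id - cst c) by [].
  by apply: is_derive_eq; rewrite subr0 -[LHS]/(b * 1) mulr1.
have -> : (fun y => a * cos (b * (y - c))) = a \*: (cos \o (fun y => b * (y - c))) by [].
by apply: is_deriveZ; apply: is_derive1_comp.
Qed.

(* Telescoping: [2 sin (a/2) cos (a j + phi)] is the increment of [sin (a (j - 1/2) + phi)]. *)
Lemma sum_cos_arith_eq0 (N n : nat) (phi : R) : (0 < n < N)%N ->
  \sum_(j < N) cos (n%:R * (2 * pi / N%:R) * j%:R + phi) = 0.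
Proof.
move=> /andP[n_gt0 ltnN]; have N_neq0 : N%:R != 0 :> R by rewrite pnatr_eq0; lia.
set a := n%:R * (2 * pi / N%:R).
have sin_half_gt0 : 0 < sin (a / 2).
  apply: sin_gt0_pi; have pi_gt0 := pi_gt0 R.
  have -> : a / 2 = pi * (n%:R / N%:R) by rewrite /a; field.
  have lt_nN : (n%:R : R) < N%:R by rewrite ltr_nat.
  have N_gt0 : (0 : R) < N%:R by rewrite ltr0n; lia.
  apply/andP; split; first by rewrite mulr_gt0 // divr_gt0 // ltr0n.
  by rewrite gtr_pMr // ltr_pdivrMr // mul1r.
apply: (mulfI (x := 2 * sin (a / 2))); first by rewrite mulf_neq0 ?gt_eqF.
rewrite mulr0 mulr_sumr -(big_mkord xpredT (fun j => 2 * sin (a / 2) * cos (a * j%:R + phi))).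
rewrite (@telescope_sumr_eq _ 0 N (fun j : nat => sin (a * j%:R - a / 2 + phi))) //.
  have -> : a * N%:R - a / 2 + phi = (a * 0%:R - a / 2 + phi) + n%:R * (2 * pi).
    by rewrite /a; field.
  by rewrite sinD_nat2pi subrr.
move=> j _; have -> : a * j.+1%:R - a / 2 + phi = (a * j%:R + phi) + a / 2.
  by rewrite -natr1; field.
have -> : a * j%:R - a / 2 + phi = (a * j%:R + phi) - a / 2 by ring.
by rewrite sinD sinB; ring.
Qed.

End Trigonometry.

Section DiscreteFourier.
Context {R : realType} {N : nat}.
Local Notation t := (2 * pi / N%:R : R).

Lemma sum_cos_diff_eq0 (l m : nat) (c : R) : l != m -> (l < N)%N -> (m < N)%N ->
  \sum_(j < N) cos ((l%:R - m%:R) * t * j%:R + c) = 0.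
Proof.
wlog lt_ml : l m c / (m < l)%N.
  move=> wlog_ml neq_lm ltlN ltmN; case: (ltngtP l m) => [lt_lm|lt_ml|eq_lm].
  - have := wlog_ml m l (- c) lt_lm; rewrite eq_sym => /(_ neq_lm ltmN ltlN) sum0.
    rewrite -[RHS]sum0; apply: eq_bigr => j _; rewrite -cosN; congr (cos _); ring.
  - exact: (wlog_ml l m c lt_ml neq_lm ltlN ltmN).
  - by rewrite eq_lm eqxx in neq_lm.
move=> _ ltlN _; rewrite -natrB; last exact: ltnW.
apply: sum_cos_arith_eq0; lia.
Qed.

Lemma sum_cos_mul_cos (l m : nat) (phi psi : R) :
  (0 < l)%N -> (0 < m)%N -> (l + m < N)%N ->
  \sum_(j < N) cos (l%:R * t * j%:R + phi) * cos (m%:R * t * j%:R + psi) =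
  if l == m then N%:R / 2 * cos (phi - psi) else 0.
Proof.
move=> l_gt0 m_gt0 lt_lmN.
have split_arg (j : 'I_N) : cos (l%:R * t * j%:R + phi) * cos (m%:R * t * j%:R + psi) =
    (cos ((l%:R - m%:R) * t * j%:R + (phi - psi)) +
     cos ((l + m)%N%:R * t * j%:R + (phi + psi))) / 2.
  rewrite cos_mul_cos natrD; congr ((cos _ + cos _) / 2); ring.
rewrite (eq_bigr _ (fun j _ => split_arg j)) -mulr_suml big_split /=.
rewrite sum_cos_arith_eq0 ?addr0; last by rewrite addn_gt0 l_gt0.
have [<-|neq_lm] := eqVneq l m.
  under eq_bigr do rewrite subrr !mul0r add0r.
  by rewrite sumr_const card_ord -[_ *+ N]mulr_natl mulrAC.
rewrite sum_cos_diff_eq0 ?mul0r //; lia.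
Qed.

Definition trigpoly (K : nat) (a b : nat -> R) (j : nat) : R :=
  \sum_(1 <= l < K) (a l * cos (l%:R * t * j%:R) + b l * sin (l%:R * t * j%:R)).

Definition fourier_cos (w : 'I_N -> R) (l : nat) : R :=
  \sum_(j < N) w j * cos (l%:R * t * j%:R).

Definition fourier_sin (w : 'I_N -> R) (l : nat) : R :=
  \sum_(j < N) w j * sin (l%:R * t * j%:R).

Context {K : nat}.
Hypothesis leKN : (K + K <= N)%N.

Lemma sum_mode_mul (l m : nat) (al bl am bm : R) : (1 <= l < K)%N -> (1 <= m < K)%N ->
  \sum_(j < N) (al * cos (l%:R * t * j%:R) + bl * sin (l%:R * t * j%:R)) *
               (am * cos (m%:R * t * j%:R) + bm * sin (m%:R * t * j%:R)) =
  if m == l then N%:R / 2 * (al * am + bl * bm) else 0.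
Proof.
move=> /andP[l_gt0 ltlK] /andP[m_gt0 ltmK].
have lt_lmN : (l + m < N)%N by lia.
have expand (j : 'I_N) :
    (al * cos (l%:R * t * j%:R) + bl * sin (l%:R * t * j%:R)) *
    (am * cos (m%:R * t * j%:R) + bm * sin (m%:R * t * j%:R)) =
    al * am * (cos (l%:R * t * j%:R + 0) * cos (m%:R * t * j%:R + 0)) +
    al * bm * (cos (l%:R * t * j%:R + 0) * cos (m%:R * t * j%:R - pi / 2)) +
    bl * am * (cos (l%:R * t * j%:R - pi / 2) * cos (m%:R * t * j%:R + 0)) +
    bl * bm * (cos (l%:R * t * j%:R - pi / 2) * cos (m%:R * t * j%:R - pi / 2)).
  by rewrite !cosBpihalf !addr0; ring.
rewrite (eq_bigr _ (fun j _ => expand j)) !big_split /= -!mulr_sumr.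
rewrite !sum_cos_mul_cos // eq_sym; case: eqP => _; last by rewrite !mulr0 !addr0.
rewrite !subrr sub0r subr0 opprK cosN cos_pihalf cos0; ring.
Qed.

Lemma sum_trigpoly_mul (a b a' b' : nat -> R) :
  \sum_(j < N) trigpoly K a b j * trigpoly K a' b' j =
  N%:R / 2 * \sum_(1 <= l < K) (a l * a' l + b l * b' l).
Proof.
under eq_bigr do rewrite /trigpoly mulr_suml.
under eq_bigr do under eq_bigr do rewrite mulr_sumr.
rewrite exchange_big mulr_sumr; apply: eq_big_nat => l lK /=.
rewrite exchange_big (eq_big_nat _ _ (fun m mK => sum_mode_mul _ _ _ _ _ _ lK mK)).
by rewrite -big_mkcond big_nat1_eq lK.
Qed.

Lemma sum_mul_trigpoly (w : 'I_N -> R) (a b : nat -> R) :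
  \sum_(j < N) w j * trigpoly K a b j =
  \sum_(1 <= l < K) (a l * fourier_cos w l + b l * fourier_sin w l).
Proof.
under eq_bigr do rewrite /trigpoly mulr_sumr.
rewrite exchange_big /=; apply: eq_bigr => l _.
rewrite /fourier_cos /fourier_sin !mulr_sumr -big_split /=.
by apply: eq_bigr => j _; ring.
Qed.

Hypothesis N_gt0 : (0 < N)%N.

(* Bessel: the residual of [w] after projection onto the modes [1 <= l < K] has
   nonnegative squared norm. *)
Lemma fourier_bessel (w : 'I_N -> R) :
  2 / N%:R * \sum_(1 <= l < K) (fourier_cos w l ^+ 2 + fourier_sin w l ^+ 2) <=
  \sum_(j < N) w j ^+ 2.
Proof.
have N_neq0 : N%:R != 0 :> R by rewrite pnatr_eq0 -lt0n.
set S := \sum_(1 <= l < K) _.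
pose a l := 2 / N%:R * fourier_cos w l; pose b l := 2 / N%:R * fourier_sin w l.
have residual_ge0 : 0 <= \sum_(j < N) (w j - trigpoly K a b j) ^+ 2.
  by apply: sumr_ge0 => j _; apply: sqr_ge0.
have expand : \sum_(j < N) (w j - trigpoly K a b j) ^+ 2 =
    \sum_(j < N) w j ^+ 2 - 2 * \sum_(j < N) w j * trigpoly K a b j
    + \sum_(j < N) trigpoly K a b j * trigpoly K a b j.
  by rewrite mulr_sumr -sumrB -big_split /=; apply: eq_bigr => j _; ring.
have cross : \sum_(1 <= l < K) (a l * fourier_cos w l + b l * fourier_sin w l) = 2 / N%:R * S.
  by rewrite /S mulr_sumr; apply: eq_bigr => l _; rewrite /a /b; ring.
have square : N%:R / 2 * \sum_(1 <= l < K) (a l * a l + b l * b l) = 2 / N%:R * S.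
  by rewrite /S !mulr_sumr; apply: eq_bigr => l _; rewrite /a /b; field.
move: residual_ge0; rewrite expand sum_mul_trigpoly sum_trigpoly_mul cross square; lra.
Qed.

End DiscreteFourier.
Arguments trigpoly {R} N.

Section ForwardDifference.
Context {R : realType} {N : nat}.
Local Notation t := (2 * pi / N%:R : R).

Definition fdiff (u : 'I_N -> R) (j : 'I_N) : R := u (ordS j) - u j.

Lemma periodic_ordS (f : R -> R) (l : nat) (j : 'I_N) :
  (forall y, f (y + l%:R * (2 * pi)) = f y) ->
  f (l%:R * t * (ordS j : nat)%:R) = f (l%:R * t * j%:R + l%:R * t).
Proof.
move=> f_per; have ltjN := ltn_ord j; rewrite /=.
have [ltj1N|eqj1N] : (j.+1 < N)%N \/ j.+1 = N by lia.
  by rewrite modn_small // -[j.+1%:R]natr1 mulrDr mulr1.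
have N_neq0 : N%:R != 0 :> R by rewrite pnatr_eq0; lia.
rewrite eqj1N modnn mulr0 -(f_per 0) add0r; congr f.
by rewrite -[X in _ = _ + X]mulr1 -mulrDr natr1 eqj1N -mulrA divfK.
Qed.

Lemma cos_mode_ordS (l : nat) (j : 'I_N) :
  cos (l%:R * t * (ordS j : nat)%:R) = cos (l%:R * t * j%:R + l%:R * t).
Proof. by apply: periodic_ordS => y; apply: cosD_nat2pi. Qed.

Lemma sin_mode_ordS (l : nat) (j : 'I_N) :
  sin (l%:R * t * (ordS j : nat)%:R) = sin (l%:R * t * j%:R + l%:R * t).
Proof. by apply: periodic_ordS => y; apply: sinD_nat2pi. Qed.

Variable u : 'I_N -> R.

Lemma fourier_cos_fdiff (l : nat) : fourier_cos (fdiff u) l =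
  fourier_cos u l * (cos (l%:R * t) - 1) + fourier_sin u l * sin (l%:R * t).
Proof.
have shift : \sum_(j < N) u (ordS j) * cos (l%:R * t * j%:R) = \sum_(k < N) u k *
    (cos (l%:R * t * k%:R) * cos (l%:R * t) + sin (l%:R * t * k%:R) * sin (l%:R * t)).
  rewrite [RHS](reindex_inj (@ordS_inj N)); apply: eq_bigr => j _.
  by rewrite cos_mode_ordS sin_mode_ordS -cosB addrK.
rewrite /fourier_cos /fdiff; under eq_bigr do rewrite mulrBl.
rewrite sumrB shift /fourier_sin !mulr_suml -sumrB -big_split /=.
by apply: eq_bigr => j _; ring.
Qed.

Lemma fourier_sin_fdiff (l : nat) : fourier_sin (fdiff u) l =
  fourier_sin u l * (cos (l%:R * t) - 1) - fourier_cos u l * sin (l%:R * t).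
Proof.
have shift : \sum_(j < N) u (ordS j) * sin (l%:R * t * j%:R) = \sum_(k < N) u k *
    (sin (l%:R * t * k%:R) * cos (l%:R * t) - cos (l%:R * t * k%:R) * sin (l%:R * t)).
  rewrite [RHS](reindex_inj (@ordS_inj N)); apply: eq_bigr => j _.
  by rewrite cos_mode_ordS sin_mode_ordS -sinB addrK.
rewrite /fourier_sin /fdiff; under eq_bigr do rewrite mulrBl.
rewrite sumrB shift /fourier_cos !mulr_suml -!sumrB.
by apply: eq_bigr => j _; ring.
Qed.

Lemma fourier_sq_fdiff (l : nat) :
  fourier_cos (fdiff u) l ^+ 2 + fourier_sin (fdiff u) l ^+ 2 =
  (fourier_cos u l ^+ 2 + fourier_sin u l ^+ 2) * (2 * sin (l%:R * t / 2)) ^+ 2.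
Proof.
rewrite fourier_cos_fdiff fourier_sin_fdiff.
have half_angle : (2 * sin (l%:R * t / 2)) ^+ 2 = 2 - 2 * cos (l%:R * t).
  set x := l%:R * t / 2; have -> : l%:R * t = x *+ 2.
    by rewrite -[x *+ 2]mulr_natr /x divfK // pnatr_eq0.
  rewrite cos_mulr2n cos2sin2; ring.
rewrite half_angle; have := cos2Dsin2 (l%:R * t); nra.
Qed.

End ForwardDifference.

Lemma quad_sqr_antisym (R : comPzRingType) (n : nat) (D : 'M[R]_n) (v : 'I_n -> R) :
  (forall j k, D k j = - D j k) ->
  - \sum_(j < n) v j * \sum_(k < n) (D *m D) j k * v k =
  \sum_(m < n) (\sum_(k < n) D m k * v k) ^+ 2.
Proof.
move=> D_antisym.
under [RHS]eq_bigr do rewrite expr2 mulr_suml.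
under [RHS]eq_bigr do under eq_bigr do rewrite mulr_sumr.
rewrite exchange_big -sumrN; apply: eq_bigr => j _ /=.
rewrite exchange_big mulr_sumr -sumrN; apply: eq_bigr => k _ /=.
rewrite mxE mulr_suml mulr_sumr -sumrN; apply: eq_bigr => m _.
by rewrite (D_antisym m j); ring.
Qed.

Lemma derive1_gcard (R : realType) (N : nat) (x0 h : R) (k : nat) (x : R) :
  let mu := 2 * pi / (N%:R * h) in
  let L (i : nat) : int := (i%:Z - (N./2)%:Z)%R in
  derive1 (gcard N x0 h k) x = N%:R^-1 * \sum_(i < N.+1)
    inv_a R N (L i) * (- sin ((L i)%:~R * mu * (x - (x0 + k%:R * h))) * ((L i)%:~R * mu)).
Proof.
move=> mu L.
have -> : gcard N x0 h k = N%:R^-1 \*: \sum_(i < N.+1) (fun y =>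
    inv_a R N (L i) * cos ((L i)%:~R * mu * (y - (x0 + k%:R * h)))).
  by apply/funext => y; rewrite /gcard big_mkord /= fct_sumE.
have := is_deriveZ N%:R^-1 (is_derive_sum (fun i =>
  is_derive_cos_affine (inv_a R N (L i)) ((L i)%:~R * mu) (x0 + k%:R * h) x)).
by move=> /(_ N.+1) D; rewrite derive1E (@derive_val _ _ _ _ _ _ _ D).
Qed.

Lemma sum_centered_even (R : realType) (f : int -> R) (M : nat) :
  (forall z, f (- z) = f z) ->
  \sum_(0 <= i < (M + M).+1) f (i%:Z - M%:Z)%R = f 0 + 2 * \sum_(1 <= l < M.+1) f l%:Z.
Proof.
move=> f_even; elim: M => [|M IH]; first by rewrite big_nat1 big_geq // subr0 mulr0 addr0.
rewrite addnS addSn big_nat_recl // big_nat_recr //= [in RHS]big_nat_recr //=.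
rewrite (eq_big_nat _ _ (F2 := fun i => f (i%:Z - M%:Z)%R)); last by move=> i _; congr f; lia.
rewrite IH sub0r f_even.
have -> : ((M + M).+2%:Z - M.+1%:Z)%R = M.+1%:Z by lia.
lra.
Qed.

Lemma mode_angle_le (R : realType) (M l : nat) : (0 < M)%N -> (l <= M)%N ->
  l%:R * (2 * pi / (M + M)%N%:R) <= pi * sin (l%:R * (2 * pi / (M + M)%N%:R) / 2) :> R.
Proof.
move=> M_gt0 lelM; have pi_gt0 := pi_gt0 R; have M_gt0' : (0 : R) < M%:R by rewrite ltr0n.
set t := 2 * pi / _.
have := @jordan_sin _ (l%:R * t / 2); rewrite [2 * (_ / 2)]mulrC divfK ?pnatr_eq0 //; apply.
have -> : l%:R * t / 2 = pi / 2 * (l%:R / M%:R).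
  by rewrite /t natrD; field; rewrite gt_eqF // -natrD pnatr_eq0; lia.
have pihalf_ge0 : 0 <= pi / 2 :> R by rewrite divr_ge0 ?ltW.
apply/andP; split; first by rewrite mulr_ge0 // divr_ge0 ?ltW.
by apply: ler_piMr => //; rewrite ler_pdivrMr // mul1r ler_nat.
Qed.

Section SpectralMatrix.
Variables (R : realType) (M : nat) (x0 h : R).
Hypotheses (M_gt0 : (0 < M)%N) (h_neq0 : h != 0).
Local Notation N := (M + M)%N.
Local Notation t := (2 * pi / N%:R : R).
Local Notation mu := (2 * pi / (N%:R * h) : R).

Let N_neq0 : N%:R != 0 :> R.
Proof. by rewrite pnatr_eq0; lia. Qed.

(* The terms [l] and [-l] of the cardinal function pair up, and the Nyquist term [l = M]
   vanishes at grid points since [sin (M mu (x_j - x_k)) = sin ((j - k) pi)]. *)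
Lemma Dspec_sin_sum (j k : 'I_N) : Dspec N x0 h j k =
  - (2 / N%:R) * mu *
    \sum_(1 <= l < M) l%:R * sin (l%:R * t * ((j : nat)%:R - (k : nat)%:R)).
Proof.
have halfN : N./2 = M by rewrite addnn doubleK.
rewrite /Dspec mxE derive1_gcard /=.
set d := (j : nat)%:R - (k : nat)%:R.
have -> : x0 + (j : nat)%:R * h - (x0 + (k : nat)%:R * h) = d * h by rewrite /d; ring.
pose F (z : int) := inv_a R N z * (- sin (z%:~R * mu * (d * h)) * (z%:~R * mu)).
rewrite -(big_mkord xpredT (fun i : nat => F (i%:Z - (N./2)%:Z)%R)) halfN.
rewrite sum_centered_even => [|z]; last first.
  by rewrite /F /inv_a abszN mulrNz !mulNr sinN; congr (_ * _); ring.
rewrite {1}/F mulr0z !mul0r !mulr0 add0r big_nat_recr //=.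
have -> : F M%:Z = 0.
  rewrite /F; have -> : (M%:Z)%:~R * mu * (d * h) = (j : nat)%:R * pi - (k : nat)%:R * pi.
    by rewrite /d natrD; field; rewrite h_neq0 -natrD N_neq0.
  by rewrite sinB !sin_nat_mulpi !mul0r mulr0 subrr oppr0 mul0r mulr0.
rewrite addr0 mulr_sumr [RHS]mulr_sumr mulr_sumr.
apply: eq_big_nat => l /andP[l_ge1 ltlM]; rewrite /F.
have -> : inv_a R N l%:Z = 1 by rewrite /inv_a halfN absz_nat ifN //; apply/eqP; lia.
have -> : (l%:Z)%:~R * mu * (d * h) = l%:R * t * d.
  by field; rewrite h_neq0 -natrD N_neq0.
by field; rewrite h_neq0 -natrD N_neq0.
Qed.

Lemma Dspec_antisym (j k : 'I_N) : Dspec N x0 h k j = - Dspec N x0 h j k.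
Proof.
rewrite !Dspec_sin_sum -[RHS]mulrN -sumrN; congr (_ * _); apply: eq_bigr => l _.
by rewrite -mulrN -sinN; congr (_ * sin _); ring.
Qed.

Lemma Dspec_mul_trigpoly (v : 'I_N -> R) (m : 'I_N) :
  \sum_(k < N) Dspec N x0 h m k * v k =
  trigpoly N M (fun l => 2 / N%:R * mu * l%:R * fourier_sin v l)
               (fun l => - (2 / N%:R * mu * l%:R * fourier_cos v l)) m.
Proof.
under eq_bigr do rewrite Dspec_sin_sum mulrC !mulr_sumr.
rewrite /trigpoly exchange_big /=; apply: eq_bigr => l _.
rewrite /fourier_cos /fourier_sin !mulr_sumr -sumrN !mulr_suml -big_split /=.
by apply: eq_bigr => k _; rewrite mulrBr sinB; ring.
Qed.

Lemma sum_sqr_Dspec_mul (v : 'I_N -> R) :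
  \sum_(m < N) (\sum_(k < N) Dspec N x0 h m k * v k) ^+ 2 =
  2 / N%:R * \sum_(1 <= l < M)
    (mu * l%:R) ^+ 2 * (fourier_cos v l ^+ 2 + fourier_sin v l ^+ 2).
Proof.
under eq_bigr do rewrite Dspec_mul_trigpoly expr2.
rewrite sum_trigpoly_mul // !mulr_sumr; apply: eq_bigr => l _.
by field; rewrite h_neq0 -natrD N_neq0.
Qed.

Lemma Dspec_energy_le (v : 'I_N -> R) :
  \sum_(m < N) (\sum_(k < N) Dspec N x0 h m k * v k) ^+ 2 <=
  (pi / 2) ^+ 2 * \sum_(j < N) (fdiff v j / h) ^+ 2.
Proof.
have freq_le l : (l < M)%N ->
    (mu * l%:R) ^+ 2 <= (pi / 2) ^+ 2 * h^-2 * (2 * sin (l%:R * t / 2)) ^+ 2.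
  move=> ltlM; have -> : mu * l%:R = l%:R * t / h by field; rewrite h_neq0 -natrD N_neq0.
  have -> : (pi / 2) ^+ 2 * h^-2 * (2 * sin (l%:R * t / 2)) ^+ 2 =
            (pi * sin (l%:R * t / 2)) ^+ 2 / h ^+ 2 by field.
  have angle_ge0 : 0 <= l%:R * t.
    by rewrite mulr_ge0 ?ler0n // divr_ge0 ?ler0n // mulr_ge0 ?ler0n // pi_ge0.
  have angle_le := @mode_angle_le R M l M_gt0 (ltnW ltlM).
  rewrite expr_div_n ler_wpM2r ?invr_ge0 ?sqr_ge0 // !expr2.
  exact: (ler_pM angle_ge0 angle_ge0 angle_le angle_le).
have -> : \sum_(j < N) (fdiff v j / h) ^+ 2 = h^-2 * \sum_(j < N) fdiff v j ^+ 2.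
  by rewrite mulr_sumr; apply: eq_bigr => j _; rewrite expr_div_n mulrC.
rewrite sum_sqr_Dspec_mul mulrA.
apply: (le_trans _ (ler_wpM2l _ (fourier_bessel (leqnn N) _ (fdiff v)))); last 2 first.
- by rewrite mulr_ge0 ?sqr_ge0 // invr_ge0 sqr_ge0.
- lia.
under [X in _ <= _ * (_ * X)]eq_bigr do rewrite fourier_sq_fdiff.
rewrite mulrCA ler_wpM2l ?divr_ge0 // mulr_sumr; apply: ler_sum_nat => l /andP[_ ltlM].
rewrite mulrCA mulrC ler_wpM2l ?addr_ge0 ?sqr_ge0 //; exact: freq_le.
Qed.

Lemma Dspec_quad_le (v : 'I_N -> R) :
  - \sum_(j < N) v j * \sum_(k < N) (Dspec N x0 h *m Dspec N x0 h) j k * v k <=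
  (pi / 2) ^+ 2 * \sum_(j < N) (fdiff v j / h) ^+ 2.
Proof. by rewrite quad_sqr_antisym; [exact: Dspec_energy_le | exact: Dspec_antisym]. Qed.

End SpectralMatrix.

Lemma sum_mxtens_index (V : nmodType) (m n : nat) (F : 'I_(m * n) -> V) :
  \sum_(k < m * n) F k = \sum_(a < m) \sum_(b < n) F (mxtens_index (a, b)).
Proof.
rewrite pair_big /= (reindex (@mxtens_index m n)) /=; last first.
  by exists (@mxtens_unindex m n) => k _; rewrite (mxtens_indexK, mxtens_unindexK).
by apply: eq_bigr => -[a b] _.
Qed.

Lemma sum_mul1mx (R : pzRingType) (n : nat) (i : 'I_n) (G : 'I_n -> R) :
  \sum_(a < n) (1%:M : 'M[R]_n) i a * G a = G i.
Proof.
rewrite (bigD1 i) //= big1 ?addr0 ?mxE ?eqxx ?mul1r // => a /negbTE neq_ai.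
by rewrite mxE eq_sym neq_ai mul0r.
Qed.

Section GridFunctions.
Variables (R : realType) (N1 N2 : nat).
Implicit Types (U : 'cV[R]_(N2 * N1)).

Lemma gvalN U j1 j2 : gval (- U) j1 j2 = - gval U j1 j2.
Proof. by rewrite /gval mxE. Qed.

Lemma gval_dxp h1 U j1 j2 :
  gval (dxp h1 U) j1 j2 = (gval U (ordS j1) j2 - gval U j1 j2) / h1.
Proof. by rewrite {1}/gval /dxp mxE mxtens_indexK. Qed.

Lemma gval_dyp h2 U j1 j2 :
  gval (dyp h2 U) j1 j2 = (gval U j1 (ordS j2) - gval U j1 j2) / h2.
Proof. by rewrite {1}/gval /dyp mxE mxtens_indexK. Qed.

Lemma gval_kronsum_mul (P : 'M[R]_N1) (Q : 'M[R]_N2) U j1 j2 :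
  gval ((tensmx (1%:M : 'M[R]_N2) P + tensmx Q (1%:M : 'M[R]_N1)) *m U) j1 j2 =
  \sum_(k1 < N1) P j1 k1 * gval U k1 j2 + \sum_(k2 < N2) Q j2 k2 * gval U j1 k2.
Proof.
rewrite /gval mxE sum_mxtens_index.
under eq_bigr do under eq_bigr do rewrite mxE !tensmxE mulrDl.
under eq_bigr do rewrite big_split /=.
rewrite big_split /=; congr (_ + _).
  rewrite exchange_big /=; apply: eq_bigr => k1 _.
  by under eq_bigr do rewrite -mulrA; rewrite sum_mul1mx.
apply: eq_bigr => k2 _.
by under eq_bigr do rewrite mulrAC mulrC; rewrite sum_mul1mx.
Qed.

Lemma ip_h_kronsum_le (h1 h2 c : R) (P : 'M[R]_N1) (Q : 'M[R]_N2) U :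
  0 <= h1 * h2 ->
  (forall v, - \sum_(j < N1) v j * \sum_(k < N1) P j k * v k <=
             c * \sum_(j < N1) (fdiff v j / h1) ^+ 2) ->
  (forall v, - \sum_(j < N2) v j * \sum_(k < N2) Q j k * v k <=
             c * \sum_(j < N2) (fdiff v j / h2) ^+ 2) ->
  ip_h h1 h2 (- ((tensmx (1%:M : 'M[R]_N2) P + tensmx Q (1%:M : 'M[R]_N1)) *m U)) U <=
  c * (ip_h h1 h2 (dxp h1 U) (dxp h1 U) + ip_h h1 h2 (dyp h2 U) (dyp h2 U)).
Proof.
move=> h12_ge0 P_le Q_le; rewrite /ip_h -mulrDr mulrCA ler_wpM2l //.
under eq_bigr do under eq_bigr do rewrite gvalN gval_kronsum_mul mulNr mulrDl opprD.
under eq_bigr do rewrite big_split /=.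
rewrite big_split /= mulrDr; apply: lerD.
  rewrite exchange_big [X in _ <= _ * X]exchange_big mulr_sumr; apply: ler_sum => j2 _ /=.
  under [X in _ <= _ * X]eq_bigr do rewrite gval_dxp -expr2.
  rewrite sumrN; under [X in - X <= _]eq_bigr do rewrite mulrC.
  exact: (P_le (fun i => gval U i j2)).
rewrite mulr_sumr; apply: ler_sum => j1 _ /=.
under [X in _ <= _ * X]eq_bigr do rewrite gval_dyp -expr2.
rewrite sumrN; under [X in - X <= _]eq_bigr do rewrite mulrC.
exact: (Q_le (fun i => gval U j1 i)).
Qed.

End GridFunctions.

Theorem lemma2p4 (R : realType) (xL xR yL yR : R) (N1 N2 : nat)
  (hx : xL < xR) (hy : yL < yR)
  (hN1 : (0 < N1)%N) (hN2 : (0 < N2)%N) (e1 : ~~ odd N1) (e2 : ~~ odd N2)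
  (U : 'cV[R]_(N2 * N1)) :
  let h1 := (xR - xL) / N1%:R in
  let h2 := (yR - yL) / N2%:R in
  semi1_h xL h1 yL h2 U <= pi / 2 * grad_norm_h h1 h2 U.
Proof.
have h1_gt0 : 0 < (xR - xL) / N1%:R by rewrite divr_gt0 ?subr_gt0 ?ltr0n.
have h2_gt0 : 0 < (yR - yL) / N2%:R by rewrite divr_gt0 ?subr_gt0 ?ltr0n.
move: ((xR - xL) / N1%:R) ((yR - yL) / N2%:R) h1_gt0 h2_gt0 => h1 h2 h1_gt0 h2_gt0 /=.
have [M1 eN1] : exists M1, N1 = (M1 + M1)%N.
  by exists N1./2; rewrite addnn -[LHS]odd_double_half (negbTE e1).
have [M2 eN2] : exists M2, N2 = (M2 + M2)%N.
  by exists N2./2; rewrite addnn -[LHS]odd_double_half (negbTE e2).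
subst N1 N2; have M1_gt0 : (0 < M1)%N by lia.
have M2_gt0 : (0 < M2)%N by lia.
rewrite /semi1_h /grad_norm_h /=.
have pihalf_ge0 : 0 <= pi / 2 :> R by rewrite divr_ge0 ?pi_ge0.
rewrite -[pi / 2]ger0_norm // -sqrtr_sqr -sqrtrM ?sqr_ge0 // ler_wsqrtr //.
apply: ip_h_kronsum_le; first by rewrite mulr_ge0 ?ltW.
- by move=> v; apply: Dspec_quad_le; rewrite ?gt_eqF.
- by move=> v; apply: Dspec_quad_le; rewrite ?gt_eqF.
Qed.
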